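(* Let $g:\mathbb B^3\to\mathbb B$ be the Boolean function induced by the formula $v_1\wedge v_2\wedge v_3$, i.e. $g(b_1,b_2,b_3)=T$ iff $b_1=b_2=b_3=T$. There is no instruction sequence $X\in\mathrm{IS}^{na}_{br}$ such that: no jump instruction occurs in $X$, the termination instruction $!$ occurs at most once in $X$, the basic instruction $\mathrm{out}.\mathrm{set}{:}F$ does not occur in $X$ (in any plain, positive test or negative test instruction), and $X$ computes $g$.
   Context: $\mathbb B=\{T,F\}$. A primitive instruction is one of: a plain basic instruction $a$, a positive test instruction $+a$, a negative test instruction $-a$ (for a basic instruction $a$), a forward jump instruction $\#l$ ($l\in\mathbb N$), or the termination instruction $!$. An instruction sequence is a finite nonempty sequence $X=u_1;\dots;u_k$ of primitive instructions; its length is $|X|=k$. Basic instructions have the form $f.m$ where the focus $f$ is one of $\mathrm{in}{:}i$, $\mathrm{aux}{:}i$ ($i\ge 1$) or $\mathrm{out}$, each naming a Boolean register, and the method $m$ is one of $\mathrm{set}{:}T$, $\mathrm{set}{:}F$, $\mathrm{get}$. Executing $f.\mathrm{set}{:}b$ sets register $f$ to $b$ and yields reply $b$; executing $f.\mathrm{get}$ leaves the register unchanged and yields its content as reply. Execution of $X=u_1;\dots;u_k$: a counter starts at $1$. If the counter exceeds $k$, execution deadlocks. At position $i$: if $u_i=!$, execution terminates; if $u_i=\#l$, execution deadlocks if $l=0$ and otherwise the counter becomes $i+l$; if $u_i$ is $a$, $+a$ or $-a$, the basic instruction $a$ is executed yielding reply $r$, and the counter becomes $i+1$ for $u_i=a$;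 for $u_i=+a$ it becomes $i+1$ if $r=T$ and $i+2$ if $r=F$; for $u_i=-a$ it becomes $i+1$ if $r=F$ and $i+2$ if $r=T$. $\mathrm{IS}_{br}$ is the set of instruction sequences in which every basic instruction occurring belongs to $\{f.\mathrm{get}: f=\mathrm{in}{:}i \text{ or } f=\mathrm{aux}{:}i\}\cup\{f.\mathrm{set}{:}b: f=\mathrm{aux}{:}i \text{ or } f=\mathrm{out},\ b\in\mathbb B\}$. $\mathrm{IS}^{na}_{br}\subseteq \mathrm{IS}_{br}$ is the set of those in which every basic instruction belongs to $\{\mathrm{in}{:}i.\mathrm{get}: i\ge1\}\cup\{\mathrm{out}.\mathrm{set}{:}T,\mathrm{out}.\mathrm{set}{:}F\}$. $X\in\mathrm{IS}_{br}$ computes $f:\mathbb B^n\to\mathbb B$ if for every $(b_1,\dots,b_n)\in\mathbb B^n$: when $X$ is executed with register $\mathrm{in}{:}j$ initialised to $b_j$ ($j\le n$) and all registers $\mathrm{aux}{:}i$ and $\mathrm{out}$ initialised to $F$, execution terminates (does not deadlock) without ever executing a basic instruction with focus $\mathrm{in}{:}j$ for $j>n$, and at termination register $\mathrm{out}$ contains $f(b_1,\dots,b_n)$. *)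

From mathcomp Require Import all_boot.
Set Implicit Arguments. Unset Strict Implicit. Unset Printing Implicit Defensive.

(* Foci: in:i, aux:i (i >= 1), out.  Methods: set:b, get. *)
Inductive focus := Fin of nat | Faux of nat | Fout.
Inductive method := MSet of bool | MGet.
Definition basic := (focus * method)%type.

Inductive instr :=
| Plain of basic | PTest of basic | NTest of basic | Jump of nat | Term.

Definition iseq := seq instr.

(* Register state: in, aux indexed by nat (index 0 unused), and out. *)
Record state := State { rin : nat -> bool; raux : nat -> bool; rout : bool }.

Definition upd (f : nat -> bool) (i : nat) (b : bool) : nat -> bool :=
  fun j => if j == i then b else f j.

Definition get_reg (f : focus) (s : state) : bool :=
  match f with Fin i => rin s i | Faux i => raux s i | Fout => rout s end.

Definition set_reg (f : focus) (b : bool) (s : state) : state :=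
  match f with
  | Fin i => State (upd (rin s) i b) (raux s) (rout s)
  | Faux i => State (rin s) (upd (raux s) i b) (rout s)
  | Fout => State (rin s) (raux s) b
  end.

Definition exec_basic (a : basic) (s : state) : bool * state :=
  match a.2 with
  | MSet b => (b, set_reg a.1 b s)
  | MGet => (get_reg a.1 s, s)
  end.

(* Instruction at (1-based) position pc, or None if out of range. *)
Definition fetch (X : iseq) (pc : nat) : option instr :=
  if (1 <= pc) && (pc <= size X) then Some (nth Term X pc.-1) else None.

Definition focus_ok (n : nat) (a : basic) : bool :=
  match a.1 with Fin j => j <= n | _ => true end.

(* runs X n pc s s' : execution of X from position pc in state s terminates
   (reaches !, no deadlock) in final state s', never executing a basic
   instruction with focus in:j for j > n. *)
Inductive runs (X : iseq) (n : nat) : nat -> state -> state -> Prop :=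
| runs_term pc s :
    fetch X pc = Some Term -> runs X n pc s s
| runs_jump pc l s s' :
    fetch X pc = Some (Jump l) -> 0 < l ->
    runs X n (pc + l) s s' -> runs X n pc s s'
| runs_plain pc a s s' :
    fetch X pc = Some (Plain a) -> focus_ok n a ->
    runs X n pc.+1 (exec_basic a s).2 s' -> runs X n pc s s'
| runs_ptest pc a s s' :
    fetch X pc = Some (PTest a) -> focus_ok n a ->
    runs X n (if (exec_basic a s).1 then pc.+1 else pc.+2) (exec_basic a s).2 s' ->
    runs X n pc s s'
| runs_ntest pc a s s' :
    fetch X pc = Some (NTest a) -> focus_ok n a ->
    runs X n (if (exec_basic a s).1 then pc.+2 else pc.+1) (exec_basic a s).2 s' ->
    runs X n pc s s'.

(* Initial state: in:j = b_j for 1 <= j <= n (other in registers are never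
   read by a computing X; set to F), all aux and out = F. *)
Definition init_state (n : nat) (bs : n.-tuple bool) : state :=
  State (fun j => nth false bs j.-1 && (1 <= j)) (fun _ => false) false.

Definition computes (n : nat) (X : iseq) (f : n.-tuple bool -> bool) : Prop :=
  forall bs : n.-tuple bool,
    exists s', runs X n 1 (init_state bs) s' /\ rout s' = f bs.

Definition basic_of (u : instr) : option basic :=
  match u with Plain a | PTest a | NTest a => Some a | _ => None end.

Definition na_basic (a : basic) : bool :=
  match a with
  | (Fin i, MGet) => 1 <= i
  | (Fout, MSet _) => true
  | _ => false
  end.

Definition na_instr (u : instr) : bool :=
  match basic_of u with Some a => na_basic a | None => true end.

Definition in_IS_na (X : iseq) : Prop := X <> [::] /\ all na_instr X.

Definition is_jump (u : instr) : bool := if u is Jump _ then true else false.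
Definition is_term (u : instr) : bool := if u is Term then true else false.
Definition is_outsetF (u : instr) : bool :=
  match basic_of u with Some (Fout, MSet false) => true | _ => false end.

Definition g3 (bs : 3.-tuple bool) : bool :=
  [&& tnth bs (inord 0), tnth bs (inord 1) & tnth bs (inord 2)].

From mathcomp Require Import all_boot.

Set Implicit Arguments.
Unset Strict Implicit.
Unset Printing Implicit Defensive.

(* Let X be a jump-free program of IS_br^na without out.set:F
   and with at most one termination instruction, at position t.
   - Every basic instruction of X is either a read in:i.get or out.set:T, so
     runs never change the input registers and, once out holds T, it keeps T.
   - Without jumps the counter only moves forward by one or two positions,
     and every run ends at the unique termination position t.
   On input TTT the out register must become T, so some position p < t holds
   an out.set:T instruction.  On an input with value F this position must be
   avoided; as the counter only steps by one or two, the run must execute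
   position p - 1 and that instruction must be a test on some in:i that skips
   position p.  This fixed test must skip both on FFF and on the input where
   only the i-th bit is T, which is impossible for either test polarity. *)

Lemma fetch_Some (X : iseq) (pc : nat) (u : instr) :
  fetch X pc = Some u -> [/\ 0 < pc, pc.-1 < size X & nth Term X pc.-1 = u].
Proof.
rewrite /fetch; case: ifP => // /andP [pc_gt0 pc_le] [<-].
by split => //; rewrite prednK.
Qed.

Lemma fetch_all (P : pred instr) (X : iseq) (pc : nat) (u : instr) :
  all P X -> fetch X pc = Some u -> P u.
Proof. by move=> /all_nthP allP /fetch_Some [_ lt_pc <-]; apply: allP. Qed.

Lemma fetch_has (P : pred instr) (X : iseq) (pc : nat) (u : instr) :
  fetch X pc = Some u -> P u -> has P X.
Proof. by move=> /fetch_Some [_ lt_pc <-] Pu; apply/(has_nthP Term); exists pc.-1. Qed.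

Lemma count_le1_index_unique (T : Type) (x0 : T) (P : pred T) (s : seq T)
    (i j : nat) :
  count P s <= 1 -> i < size s -> j < size s ->
  P (nth x0 s i) -> P (nth x0 s j) -> i = j.
Proof.
have has_tail k (s' : seq T) : k < size s' -> P (nth x0 s' k) -> 0 < count P s'.
  by move=> lt_k Pk; rewrite -has_count; apply/(has_nthP x0); exists k.
elim: s i j => [|x s IHs] [|i] [|j] //= cnt lt_i lt_j Pi Pj.
- by move: cnt; rewrite Pi -[count P s]prednK ?(has_tail j).
- by move: cnt; rewrite Pj -[count P s]prednK ?(has_tail i).
- congr S; apply: IHs Pi Pj => //; exact: leq_trans (leq_addl _ _) cnt.
Qed.

Lemma term_position_unique (X : iseq) (q1 q2 : nat) :
  count is_term X <= 1 ->
  fetch X q1 = Some Term -> fetch X q2 = Some Term -> q1 = q2.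
Proof.
move=> cnt /fetch_Some [q1_gt0 lt1 nth1] /fetch_Some [q2_gt0 lt2 nth2].
rewrite -(prednK q1_gt0) -(prednK q2_gt0); congr S.
by apply: (count_le1_index_unique (x0 := Term) cnt lt1 lt2); rewrite ?nth1 ?nth2.
Qed.

Definition skips (u : instr) (r : bool) : bool :=
  match u with PTest _ => ~~ r | NTest _ => r | _ => false end.

Definition next_pc (u : instr) (r : bool) (pc : nat) : nat :=
  if skips u r then pc.+2 else pc.+1.

Lemma next_pc_gt (u : instr) (r : bool) (pc : nat) : pc < next_pc u r pc.
Proof. by rewrite /next_pc; case: skips. Qed.

Section MonotonePrograms.

Variables (X : iseq) (n : nat).
Hypothesis X_na : all na_instr X.
Hypothesis X_no_outsetF : ~~ has is_outsetF X.
Hypothesis X_no_jump : ~~ has is_jump X.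

Lemma basic_read_or_setT (pc : nat) (u : instr) (a : basic) :
  fetch X pc = Some u -> basic_of u = Some a ->
  (exists2 i, a = (Fin i, MGet) & 0 < i) \/ a = (Fout, MSet true).
Proof.
move=> fetch_u basic_u.
have := fetch_all X_na fetch_u; rewrite /na_instr basic_u.
have : ~~ is_outsetF u.
  by apply: contra X_no_outsetF => /(fetch_has fetch_u).
rewrite /is_outsetF basic_u.
by case: a {basic_u} => [[i|i|] [[]|]] //= _ i_gt0; [left; exists i | right].
Qed.

Lemma runs_monotone_ind (P : nat -> state -> state -> Prop) :
  (forall pc s, fetch X pc = Some Term -> P pc s s) ->
  (forall pc u i s s', fetch X pc = Some u -> basic_of u = Some (Fin i, MGet) ->
     0 < i <= n -> runs X n (next_pc u (rin s i) pc) s s' ->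
     P (next_pc u (rin s i) pc) s s' -> P pc s s') ->
  (forall pc u s s', fetch X pc = Some u -> basic_of u = Some (Fout, MSet true) ->
     runs X n (next_pc u true pc) (set_reg Fout true s) s' ->
     P (next_pc u true pc) (set_reg Fout true s) s' -> P pc s s') ->
  forall pc s s', runs X n pc s s' -> P pc s s'.
Proof.
move=> P_term P_read P_setT.
have P_basic pc u a s s' : fetch X pc = Some u -> basic_of u = Some a ->
    focus_ok n a -> runs X n (next_pc u (exec_basic a s).1 pc) (exec_basic a s).2 s' ->
    P (next_pc u (exec_basic a s).1 pc) (exec_basic a s).2 s' -> P pc s s'.
  move=> fetch_u basic_u.
  case: (basic_read_or_setT fetch_u basic_u) => [[i eq_a i_gt0] | eq_a];
    rewrite {}eq_a in basic_u * => /=.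
    by move=> le_in; apply: P_read fetch_u basic_u _; rewrite i_gt0.
  by move=> _; apply: P_setT fetch_u basic_u.
move=> pc0 s0 s0'; elim=> {pc0 s0 s0'} [pc s fetch_t | pc l s s' fetch_j | pc a s s' fetch_a
  | pc a s s' fetch_a | pc a s s' fetch_a].
- exact: P_term.
- by case/negP: X_no_jump; apply: fetch_has fetch_j _.
- exact: (P_basic pc (Plain a)).
- move=> ok; move: (P_basic pc (PTest a) a s s' fetch_a erefl ok).
  by rewrite /next_pc /=; case: (exec_basic a s).1.
- move=> ok; move: (P_basic pc (NTest a) a s s' fetch_a erefl ok).
  by rewrite /next_pc /=; case: (exec_basic a s).1.
Qed.

Lemma runs_monotone (pc : nat) (s s' : state) :
  runs X n pc s s' -> rin s' = rin s /\ (rout s -> rout s').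
Proof.
elim/runs_monotone_ind => // pc0 u s0 s1 _ _ _ [-> out_T].
by split => // _; apply: out_T.
Qed.

Lemma runs_terminates (pc : nat) (s s' : state) :
  runs X n pc s s' -> exists2 t, pc <= t & fetch X t = Some Term.
Proof.
elim/runs_monotone_ind => [pc0 s0 fetch_t | pc0 u i s0 s1 _ _ _ _ [t le_t]
  | pc0 u s0 s1 _ _ _ [t le_t]]; first by exists pc0.
all: by exists t => //; exact: ltnW (leq_trans (next_pc_gt _ _ _) le_t).
Qed.

Variable t : nat.
Hypothesis X_term : fetch X t = Some Term.
Hypothesis X_term_unique : count is_term X <= 1.

Lemma runs_before_term (pc : nat) (s s' : state) : runs X n pc s s' -> pc <= t.
Proof.
case/runs_terminates => q le_q fetch_q.
by rewrite -(term_position_unique X_term_unique fetch_q X_term).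
Qed.

Lemma setT_executed (pc : nat) (s s' : state) :
  runs X n pc s s' -> rout s = false -> rout s' = true ->
  exists p u, [/\ pc <= p < t, fetch X p = Some u & basic_of u = Some (Fout, MSet true)].
Proof.
elim/runs_monotone_ind => [pc0 s0 _ -> // | pc0 u i s0 s1 _ _ _ _ IH out0 out1
  | pc0 u s0 s1 fetch_u basic_u run _ _ _].
- have [p [w [/andP [le_p lt_p] fetch_w basic_w]]] := IH out0 out1.
  exists p, w; split => //; rewrite lt_p andbT; exact: ltnW (leq_trans (next_pc_gt _ _ _) le_p).
- exists pc0, u; split => //; rewrite leqnn /=.
  exact: leq_trans (next_pc_gt _ _ _) (runs_before_term run).
Qed.

Lemma setT_skipped (pc : nat) (s s' : state) (p : nat) (u : instr) :
  runs X n pc s s' -> rout s' = false -> pc <= p < t ->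
  fetch X p = Some u -> basic_of u = Some (Fout, MSet true) ->
  exists i w, [/\ 0 < i <= n, fetch X p.-1 = Some w,
    basic_of w = Some (Fin i, MGet) & skips w (rin s i)].
Proof.
move=> run; elim/runs_monotone_ind: run p u
  => [pc0 s0 fetch_t | pc0 w i s0 s1 fetch_w basic_w i_range _ IH
     | pc0 w s0 s1 _ _ run _] p u out_F.
- move=> /andP [le_p lt_p]; suff: pc0 = t by move=> eq_t; rewrite eq_t leqNgt lt_p in le_p.
  exact: term_position_unique X_term_unique fetch_t X_term.
- move=> /andP [le_p lt_p] fetch_u basic_u.
  have [lt_next | ] := ltnP p (next_pc w (rin s0 i) pc0); last first.
    by move=> le_next; apply: (IH p u) => //; rewrite le_next.
  move: le_p; rewrite leq_eqVlt => /orP [/eqP eq_p | lt_pc].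
    by move: fetch_u basic_u; rewrite -eq_p fetch_w => -[<-]; rewrite basic_w.
  move: lt_next; rewrite /next_pc; case: ifP => [skip_w | _]; last by rewrite ltnS leqNgt lt_pc.
  rewrite ltnS => le_p; have -> : p = pc0.+1 by apply/eqP; rewrite eqn_leq le_p.
  by exists i, w.
- by have [_ /(_ erefl)] := runs_monotone run; rewrite out_F.
Qed.

End MonotonePrograms.

Lemma g3E (bs : 3.-tuple bool) :
  g3 bs = [&& nth false bs 0, nth false bs 1 & nth false bs 2].
Proof. by rewrite /g3 !(tnth_nth false) !inordK. Qed.

(* An instruction reading in:i cannot skip its successor on every input on
   which g is F: a plain read never skips, a positive test does not skip on
   the input whose only T bit is the i-th one, a negative test does not skip
   on FFF. *)
Lemma no_test_skips_on_all_F (w : instr) (i : nat) :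
  0 < i <= 3 -> basic_of w = Some (Fin i, MGet) ->
  ~ (forall bs : 3.-tuple bool, g3 bs = false -> skips w (rin (init_state bs) i)).
Proof.
move=> i_range; case: w => // a _ skip_w.
- by move: (skip_w [tuple false; false; false]); rewrite g3E => /(_ erefl).
- case: i i_range skip_w => [|[|[|[|i]]]] //= _ skip_w.
  + by move: (skip_w [tuple true; false; false]); rewrite g3E => /(_ erefl).
  + by move: (skip_w [tuple false; true; false]); rewrite g3E => /(_ erefl).
  + by move: (skip_w [tuple false; false; true]); rewrite g3E => /(_ erefl).
- move: (skip_w [tuple false; false; false]); rewrite g3E => /(_ erefl).
  by case: i i_range {skip_w} => [|[|[|[|i]]]] //=.
Qed.

Theorem theorem3 :
  ~ exists X : iseq,
      [/\ in_IS_na X,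
          ~~ has is_jump X,
          count is_term X <= 1,
          ~~ has is_outsetF X
        & computes X g3].
Proof.
move=> [X [[_ X_na] X_no_jump X_term1 X_no_outsetF X_g3]].
have [s1 [run1 out1]] := X_g3 [tuple true; true; true]; rewrite g3E in out1.
have [t _ X_term] := runs_terminates X_na X_no_outsetF X_no_jump run1.
have [p [u [range_p fetch_u basic_u]]] :=
  setT_executed X_na X_no_outsetF X_no_jump X_term X_term1 run1 erefl out1.
have skip_on_F bs : g3 bs = false -> exists i w, [/\ 0 < i <= 3,
    fetch X p.-1 = Some w, basic_of w = Some (Fin i, MGet)
    & skips w (rin (init_state bs) i)].
  move=> g_F; have [s2 [run2 out2]] := X_g3 bs; rewrite g_F in out2.
  exact: (setT_skipped X_na X_no_outsetF X_no_jump X_term X_term1 run2 out2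
    range_p fetch_u basic_u).
(* That instruction is one fixed test on one input register. *)
have g_FFF : g3 [tuple false; false; false] = false by rewrite g3E.
have [i [w [i_range fetch_w basic_w _]]] := skip_on_F _ g_FFF.
apply: (no_test_skips_on_all_F i_range basic_w) => bs /skip_on_F.
case=> j [w' [_ fetch_w' basic_w' skip_w']].
move: fetch_w'; rewrite fetch_w => -[eq_w]; subst w'.
by move: basic_w'; rewrite basic_w => -[->].
Qed.
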